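(* Let $3\le h\le n-1$ and let $G$ be a connected graph $D$-cospectral to $K^{h}_{n}$. Then $G$ contains no induced subgraph isomorphic to any of the graphs $C_4$, $C_5$, $H_1$, $H_4$, $H_9$, $H_{10}$, $H_{11}$, $H_{12}$, $H_{13}$, where: $H_1$ is the path $a\!-\!b\!-\!c\!-\!d$ together with a vertex $e$ adjacent to all of $a,b,c,d$; $H_4$ has vertices $a,b,c,d,e$ and edges $ab,bc,ad,bd,be,de$ (a $K_4$ minus an edge, with a pendant vertex $c$ attached to one of its two vertices of degree $3$); $H_9$ is $K_2\vee P_3$ (an edge whose two ends are both joined to every vertex of a path on $3$ vertices); $H_{10}$ is $K_2\vee \overline{K_3}$ (an edge whose two ends are both joined to each of $3$ pairwise non-adjacent vertices); $H_{11}$ is $K_5$ together with one extra vertex adjacent to exactly two vertices of the $K_5$; $H_{12}$ is $K_2\vee 2K_2$ (an edge whose two ends are both joined to every vertex of two disjoint edges); $H_{13}$ consists of two triangles sharing exactly one vertex $b$, together with a pendant vertex adjacent to $b$.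
   Context: For a connected graph $G$, the distance matrix $D(G)$ has as $(i,j)$-entry the distance between the $i$-th and $j$-th vertices; two graphs are $D$-cospectral if their distance matrices have the same spectrum. $K^{h}_{n}$ denotes the graph on $n$ vertices obtained from $K_h$ by attaching $n-h$ pendant edges to one vertex of $K_h$. $G_1\vee G_2$ denotes the join (complete product) of $G_1$ and $G_2$; $\overline{K_3}$ is the edgeless graph on $3$ vertices; $2K_2$ is two disjoint edges. *)

From mathcomp Require Import all_boot all_order all_algebra algC.
Set Implicit Arguments. Unset Strict Implicit. Unset Printing Implicit Defensive.
Import GRing.Theory Num.Theory.

Definition simple_graph (n : nat) (g : rel 'I_n) : Prop :=
  symmetric g /\ irreflexive g.

Definition connected_graph (n : nat) (g : rel 'I_n) : Prop :=
  forall x y, connect g x y.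

Fixpoint ball (n : nat) (g : rel 'I_n) (k : nat) (x : 'I_n) : {set 'I_n} :=
  if k is k'.+1 then
    ball g k' x :|: [set y | [exists z in ball g k' x, g z y]]
  else [set x].

(* graph distance: least k with y in ball k x (meaningful for connected g) *)
Definition gdist (n : nat) (g : rel 'I_n) (x y : 'I_n) : nat :=
  find (fun k => y \in ball g k x) (iota 0 n).

Definition distmx (n : nat) (g : rel 'I_n) : 'M[algC]_n :=
  \matrix_(i, j) ((gdist g i j)%:R)%R.

(* D-cospectral: distance matrices have the same spectrum (with multiplicity),
   i.e. the same characteristic polynomial over the algebraically closed algC. *)
Definition D_cospectral (n : nat) (g1 g2 : rel 'I_n) : Prop :=
  char_poly (distmx g1) = char_poly (distmx g2).

(* K^h_n : clique on vertices 0..h-1, vertices h..n-1 pendant at vertex 0 *)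
Definition Khn (n h : nat) : rel 'I_n :=
  fun i j => (i != j) && ((((i : nat) < h) && ((j : nat) < h)) || ((i : nat) == 0) || ((j : nat) == 0)).

Definition mkgraph (k : nat) (es : seq (nat * nat)) : rel 'I_k :=
  fun i j => ((i : nat, j : nat) \in es) || ((j : nat, i : nat) \in es).

Definition induced_sub (k n : nat) (H : rel 'I_k) (g : rel 'I_n) : Prop :=
  exists f : 'I_k -> 'I_n, injective f /\ forall a b, g (f a) (f b) = H a b.

Definition C4 : rel 'I_4 := @mkgraph 4 [:: (0,1); (1,2); (2,3); (3,0)].
Definition C5 : rel 'I_5 := @mkgraph 5 [:: (0,1); (1,2); (2,3); (3,4); (4,0)].
(* a=0,b=1,c=2,d=3,e=4 *)
Definition H1 : rel 'I_5 :=
  @mkgraph 5 [:: (0,1); (1,2); (2,3); (4,0); (4,1); (4,2); (4,3)].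
Definition H4 : rel 'I_5 :=
  @mkgraph 5 [:: (0,1); (1,2); (0,3); (1,3); (1,4); (3,4)].
(* K2 = {0,1}, P3 = 2-3-4 *)
Definition H9 : rel 'I_5 :=
  @mkgraph 5 [:: (0,1); (2,3); (3,4); (0,2); (0,3); (0,4); (1,2); (1,3); (1,4)].
(* K2 = {0,1}, independent {2,3,4} *)
Definition H10 : rel 'I_5 :=
  @mkgraph 5 [:: (0,1); (0,2); (0,3); (0,4); (1,2); (1,3); (1,4)].
(* K5 on 0..4, vertex 5 adjacent to 0 and 1 *)
Definition H11 : rel 'I_6 :=
  @mkgraph 6 [:: (0,1); (0,2); (0,3); (0,4); (1,2); (1,3); (1,4); (2,3); (2,4); (3,4);
                (5,0); (5,1)].
(* K2 = {0,1}, 2K2 = {2,3},{4,5} *)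
Definition H12 : rel 'I_6 :=
  @mkgraph 6 [:: (0,1); (2,3); (4,5); (0,2); (0,3); (0,4); (0,5);
                (1,2); (1,3); (1,4); (1,5)].
(* b = 0; triangles 0-1-2 and 0-3-4; pendant 5 at 0 *)
Definition H13 : rel 'I_6 :=
  @mkgraph 6 [:: (0,1); (1,2); (2,0); (0,3); (3,4); (4,0); (0,5)].

From mathcomp Require Import all_boot all_order all_algebra algC.
From mathcomp Require Import spectral sesquilinear ring zify.

Set Implicit Arguments. Unset Strict Implicit. Unset Printing Implicit Defensive.

(* An inertia argument.  For a hermitian A and real a, b let npos A a b count the
   eigenvalues l of A with a l + b > 0; it depends only on the spectrum of A.
   For K = K^h_n, the quadratic form of a D(K) + b I is nonpositive on the
   kernel of one or two explicit linear forms, so npos D(K) a b <= 1 for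
   (a, b) = (2, 1) and (-1, -2), and npos D(K) 1 1 <= 2.  Each forbidden graph H
   has diameter 2, so an induced copy of H in G carries D(H) as a principal
   submatrix of D(G); an integer matrix V with V (a D(H) + b I) V^T diagonal and
   positive then spans a subspace of dimension 2 (3 for H4) on which the form of
   a D(G) + b I is positive definite, whence npos D(G) a b >= 2 (resp. 3). *)

Section Distance.
Variables (n : nat) (g : rel 'I_n).

Lemma ball_mono k l x : k <= l -> ball g k x \subset ball g l x.
Proof.
elim: l => [|l IH]; first by rewrite leqn0 => /eqP ->.
rewrite leq_eqVlt => /orP [/eqP -> // | /IH sub_kl].
by apply: subset_trans sub_kl _; rewrite subsetUl.
Qed.

Lemma mem_ballS k x y :
  (y \in ball g k.+1 x) = (y \in ball g k x) || [exists z in ball g k x, g z y].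
Proof. by rewrite /= !inE. Qed.

Lemma mem_ball1 x y : (y \in ball g 1 x) = (y == x) || g x y.
Proof.
rewrite mem_ballS inE; congr (_ || _).
apply/existsP/idP => [[z /andP [/set1P -> //]] | gxy].
by exists x; rewrite inE eqxx.
Qed.

Lemma mem_ball_path k x y :
  y \in ball g k x <-> exists s, [/\ size s <= k, path g x s & last x s = y].
Proof.
split.
  elim: k y => [|k IH] y; first by move=> /set1P ->; exists [::].
  rewrite mem_ballS => /orP [/IH [s [? ? ?]] | /existsP [z /andP [/IH [s [? ? ?]] gzy]]].
    by exists s; split; rewrite ?leqW.
  exists (rcons s y); rewrite size_rcons rcons_path last_rcons; split=> //.
  by apply/andP; split; subst z.
elim: k y => [|k IH] y [s []].
  by rewrite leqn0 => /nilP -> _ <-; rewrite inE.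
case/lastP: s => [_ _ <-|s z]; first by apply: (subsetP (ball_mono x (leq0n _))); rewrite inE.
rewrite size_rcons ltnS rcons_path last_rcons => size_s /andP [path_s gz] <-.
rewrite mem_ballS; apply/orP; right; apply/existsP; exists (last x s).
by rewrite gz IH //; exists s.
Qed.

Lemma gdist_least k x y : k < n -> y \in ball g k x ->
  (forall j, j < k -> y \notin ball g j x) -> gdist g x y = k.
Proof.
move=> lt_kn yk y_out; rewrite /gdist.
have -> : iota 0 n = iota 0 k ++ iota k (n - k) by rewrite -iotaD subnKC // ltnW.
rewrite find_cat size_iota.
have -> : has (fun j => y \in ball g j x) (iota 0 k) = false.
  by apply/hasP => -[j]; rewrite mem_iota => /andP [_ /y_out /negP].
have -> : n - k = (n - k).-1.+1 by lia.
by rewrite /= yk addn0.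
Qed.

Lemma gdist0 x : gdist g x x = 0.
Proof. by apply: gdist_least; rewrite ?inE //; apply: leq_ltn_trans (ltn_ord x). Qed.

Lemma gdist1 x y : x != y -> g x y -> gdist g x y = 1.
Proof.
move=> neq_xy gxy; apply: gdist_least.
- by case: x y neq_xy {gxy} => [x ?] [y ?]; rewrite -val_eqE /=; lia.
- by rewrite mem_ball1 gxy orbT.
- by move=> j; rewrite ltnS leqn0 => /eqP ->; rewrite inE eq_sym.
Qed.

Lemma gdist2 x y z : 2 < n -> x != y -> ~~ g x y -> g x z -> g z y -> gdist g x y = 2.
Proof.
move=> n_gt2 neq_xy gxy gxz gzy; apply: gdist_least => // [|j lt_j2].
  by rewrite mem_ballS; apply/orP; right; apply/existsP; exists z; rewrite gzy mem_ball1 gxz orbT.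
apply: contraNN (_ : y \notin ball g 1 x); first by apply/subsetP/ball_mono; lia.
by rewrite mem_ball1 negb_or eq_sym neq_xy.
Qed.

Hypothesis g_sym : symmetric g.

Lemma mem_ball_sym k x y : y \in ball g k x -> x \in ball g k y.
Proof.
case/mem_ball_path => s [size_s path_s <-]; apply/mem_ball_path.
exists (rev (belast x s)); split.
- by rewrite size_rev size_belast.
- by rewrite rev_path (@eq_path _ _ g) // => a b /=; exact: g_sym.
- by case: s {size_s path_s} => [|a s] //=; rewrite rev_cons last_rcons.
Qed.

Lemma gdist_sym x y : gdist g x y = gdist g y x.
Proof. by apply: eq_find => k; apply/idP/idP => /mem_ball_sym. Qed.

End Distance.

Import Order.TTheory GRing.Theory Num.Theory.
Local Open Scope ring_scope.
Local Open Scope sesquilinear_scope.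

Definition qf n (A : 'M[algC]_n) (x : 'rV[algC]_n) : algC := (x *m A *m x^t*) 0 0.

Lemma qf_mulmx m n (A : 'M[algC]_n) (V : 'M_(m, n)) z :
  qf A (z *m V) = qf (V *m A *m V^t*) z.
Proof. by rewrite /qf trmx_mul map_mxM !mulmxA. Qed.

Section QuadraticForm.
Variable n : nat.
Implicit Types (A B : 'M[algC]_n) (u v x : 'rV[algC]_n).

Lemma qfD A B x : qf (A + B) x = qf A x + qf B x.
Proof. by rewrite /qf mulmxDr mulmxDl mxE. Qed.

Lemma qfN A x : qf (- A) x = - qf A x.
Proof. by rewrite /qf mulmxN mulNmx mxE. Qed.

Lemma qfB A B x : qf (A - B) x = qf A x - qf B x.
Proof. by rewrite qfD qfN. Qed.

Lemma qfZ c A x : qf (c *: A) x = c * qf A x.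
Proof. by rewrite /qf -scalemxAr -scalemxAl mxE. Qed.

Lemma qf_diag v x : qf (diag_mx v) x = \sum_i v 0 i * (x 0 i * (x 0 i)^*).
Proof.
rewrite /qf mul_mx_diag mxE; apply: eq_bigr => i _.
by rewrite !mxE mulrCA mulrA.
Qed.

Lemma qf_diag_ge0 v x : (forall i, 0 <= v 0 i) -> 0 <= qf (diag_mx v) x.
Proof.
by move=> v_ge0; rewrite qf_diag; apply: sumr_ge0 => i _; rewrite mulr_ge0 ?mul_conjC_ge0.
Qed.

Lemma qf_diag_indicator_ge0 (F : 'I_n -> bool) x :
  0 <= qf (diag_mx (\row_i (F i)%:R)) x.
Proof. by apply: qf_diag_ge0 => i; rewrite mxE ler0n. Qed.

Lemma qf_diag_gt0 v x : (forall i, 0 < v 0 i) -> x != 0 -> 0 < qf (diag_mx v) x.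
Proof.
move=> v_gt0 /eqP x_neq0; have [i xi_neq0] : exists i, x 0 i != 0.
  apply/existsP; apply: contra_notT x_neq0 => /existsPn xi0.
  by apply/rowP => i; rewrite mxE; apply/eqP/negPn.
rewrite qf_diag (bigD1 i) //= ltr_wpDr //; last by rewrite mulr_gt0 ?mul_conjC_gt0.
by apply: sumr_ge0 => j _; rewrite mulr_ge0 ?mul_conjC_ge0 ?ltW.
Qed.

Definition dotv v x : algC := (x *m v^T) 0 0.

Lemma dotv_eq0 v x : x *m v^T = 0 -> dotv v x = 0.
Proof. by rewrite /dotv => ->; rewrite mxE. Qed.

Lemma dotvD u v x : dotv (u + v) x = dotv u x + dotv v x.
Proof. by rewrite /dotv linearD mulmxDr mxE. Qed.

Lemma dotvB u v x : dotv (u - v) x = dotv u x - dotv v x.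
Proof. by rewrite /dotv linearB mulmxBr !mxE. Qed.

Lemma dotvZ c v x : dotv (c *: v) x = c * dotv v x.
Proof. by rewrite /dotv linearZ -scalemxAr mxE. Qed.

Lemma qf_outer u v x : v \is a realmx -> qf (u^T *m v) x = dotv u x * (dotv v x)^*.
Proof.
move=> /realmxC v_real; rewrite /qf !mulmxA -(mulmxA (x *m u^T)) mxE big_ord1 -[in LHS]v_real.
rewrite (_ : _ *m x^t* = (x *m v^T)^t*); first by rewrite /dotv !mxE.
by rewrite trmx_mul map_mxM trmxK.
Qed.

End QuadraticForm.

Lemma rowsub1_conj m n (f : 'I_m -> 'I_n) (A : 'M[algC]_n) :
  rowsub f 1%:M *m A *m (rowsub f 1%:M)^t* = mxsub f f A.
Proof.
by rewrite -rowsubE -map_trmx map_mxsub map_mx1 trmx_mxsub trmx1 -mxsub_mul mulmx1.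
Qed.

Lemma mxsub_diag m n (f : 'I_m -> 'I_n) (d : 'rV[algC]_n) :
  injective f -> mxsub f f (diag_mx d) = diag_mx (colsub f d).
Proof. by move=> f_inj; apply/matrixP => i j; rewrite !mxE (inj_eq f_inj). Qed.

Lemma exists_nonzero_capmx n p q (U : 'M[algC]_(p, n)) (W : 'M[algC]_(q, n)) :
  (n < \rank U + \rank W)%N ->
  exists2 x : 'rV_n, x != 0 & (x <= U)%MS && (x <= W)%MS.
Proof.
move=> lt_n_rank; have : (U :&: W)%MS != 0.
  rewrite -mxrank_eq0 -lt0n; move: lt_n_rank; rewrite -mxrank_sum_cap.
  by have := rank_leq_col (U + W)%MS; lia.
case/rowV0Pn => x x_cap x_neq0; exists x => //.
by rewrite (submx_trans x_cap (capmxSl _ _)) (submx_trans x_cap (capmxSr _ _)).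
Qed.

Definition npos n (A : 'M[algC]_n) (a b : algC) : nat :=
  #|[set i | 0 < a * spectral_diag A 0 i + b]|.
Arguments npos {n} A (a b)%_R.

Section PositiveIndex.
Variables (n : nat) (A : 'M[algC]_n).
Hypothesis A_herm : A \is hermsymmx.
Let P := spectralmx A.
Let d := spectral_diag A.

Lemma spectral_congr a b :
  P *m (a *: A + b%:M) *m P^t* = diag_mx (\row_i (a * d 0 i + b)).
Proof.
have /orthomx_spectralP A_diag := hermitian_normalmx A_herm.
have PPt : P *m P^t* = 1%:M by apply/unitarymxP/spectral_unitarymx.
rewrite -/P -/d invmx_unitary ?spectral_unitarymx // in A_diag; clearbody P d.
rewrite mulmxDr mulmxDl -scalemxAr -scalemxAl mul_mx_scalar -scalemxAl.
rewrite A_diag !mulmxA PPt mul1mx -mulmxA PPt mulmx1 scalemx1.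
by apply/matrixP => i j; rewrite !mxE mulrnDl -mulrnAr.
Qed.

Lemma spectral_subspace a b (S : {set 'I_n}) :
  exists U : 'M[algC]_(#|S|, n), \rank U = #|S| /\
    forall z, qf (a *: A + b%:M) (z *m U) =
              qf (diag_mx (\row_k (a * d 0 (enum_val k) + b))) z.
Proof.
pose R := rowsub (@enum_val _ (mem S)) 1%:M : 'M[algC]_(#|S|, n).
have PPt : P *m P^t* = 1%:M by apply/unitarymxP/spectral_unitarymx.
have conjR B : R *m (P *m B *m P^t*) *m R^t* = (R *m P) *m B *m (R *m P)^t*.
  by rewrite trmx_mul map_mxM !mulmxA.
exists (R *m P); split=> [|z].
  apply/mxrank_unitary/unitarymxP; rewrite -[X in X *m _ = _]mulmx1 -conjR mulmx1 PPt.
  rewrite rowsub1_conj -diag_const_mx mxsub_diag ?mxsub_const ?diag_const_mx //.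
  exact: enum_val_inj.
rewrite (qf_mulmx (a *: A + b%:M) (R *m P) z) -conjR spectral_congr rowsub1_conj.
rewrite mxsub_diag; last exact: enum_val_inj.
by congr qf; apply/matrixP => i j; rewrite !mxE.
Qed.

Lemma npos_add_rank_le a b q (W : 'M[algC]_(q, n)) :
  (forall x, (x <= W)%MS -> qf (a *: A + b%:M) x <= 0) ->
  (npos A a b + \rank W <= n)%N.
Proof.
move=> W_nonpos; rewrite leqNgt; apply/negP => lt_n.
have [U [rankU qfU]] := spectral_subspace a b [set i | 0 < a * d 0 i + b].
have := exists_nonzero_capmx (U := U) (W := W); rewrite rankU.
case/(_ lt_n) => x x_neq0 /andP [/submxP [z x_def] /W_nonpos].
rewrite x_def qfU lt_geF //.
apply: qf_diag_gt0 => [k|]; first by rewrite mxE; have := enum_valP k; rewrite inE.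
by apply: contraNneq x_neq0 => z0; rewrite x_def z0 mul0mx.
Qed.

Lemma npos_ge a b p (W : 'M[algC]_(p, n)) :
  a \is Num.real -> b \is Num.real ->
  (forall z, z != 0 -> 0 < qf (a *: A + b%:M) (z *m W)) -> (p <= npos A a b)%N.
Proof.
move=> a_real b_real W_pos; set S := [set i | ~~ (0 < a * d 0 i + b)].
have rankW : \rank W = p.
  apply/eqP; rewrite -[_ == _]/(row_free W) -kermx_eq0.
  apply/rowV0P => z /sub_kermxP zW0; apply/eqP/negPn/negP => /W_pos.
  by rewrite zW0 /qf !mul0mx mxE ltxx.
have npos_compl : (npos A a b + #|S| = n)%N.
  have -> : S = ~: [set i | 0 < a * d 0 i + b] by apply/setP => i; rewrite !inE.
  by rewrite cardsC card_ord.
suff : (#|S| + p <= n)%N by lia.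
rewrite leqNgt; apply/negP => lt_n.
have [U [rankU qfU]] := spectral_subspace a b S.
have := exists_nonzero_capmx (U := U) (W := W); rewrite rankU rankW.
case/(_ lt_n) => x x_neq0 /andP [/submxP [z x_U] /submxP [y x_W]].
have /W_pos : y != 0 by apply: contraNneq x_neq0 => y0; rewrite x_W y0 mul0mx.
rewrite -x_W x_U qfU le_gtF // -oppr_ge0 -qfN -raddfN /=.
apply: qf_diag_ge0 => k; rewrite !mxE oppr_ge0.
have := enum_valP k; rewrite inE -real_leNgt ?rpred0 //.
by rewrite rpredD // rpredM //; have /mxOverP := hermitian_spectral_diag_real A_herm; apply.
Qed.

Lemma npos_le_ker a b r (L : 'M[algC]_(n, r)) :
  (forall x, x *m L = 0 -> qf (a *: A + b%:M) x <= 0) -> (npos A a b <= r)%N.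
Proof.
move=> ker_nonpos; have : (npos A a b + \rank (kermx L) <= n)%N.
  by apply: npos_add_rank_le => x /sub_kermxP; exact: ker_nonpos.
by rewrite mxrank_ker; have := rank_leq_col L; lia.
Qed.

End PositiveIndex.

Lemma det_scalar_sub_conj (R : comUnitRingType) n (Q Z : 'M[R]_n) c :
  Q \in unitmx -> \det (c%:M - invmx Q *m Z *m Q) = \det (c%:M - Z).
Proof.
move=> Q_unit; have -> : c%:M - invmx Q *m Z *m Q = invmx Q *m (c%:M - Z) *m Q.
  rewrite mulmxBr mulmxBl; congr (_ - _).
  by rewrite -mulmxA -scalar_mxC mulmxA mulVmx // mul1mx.
by rewrite !det_mulmx mulrC mulrA -det_mulmx mulmxV // det1 mul1r.
Qed.

Lemma char_poly_conj n (Q A : 'M[algC]_n) :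
  Q \in unitmx -> char_poly (invmx Q *m A *m Q) = char_poly A.
Proof.
move=> Q_unit; rewrite /char_poly /char_poly_mx !map_mxM map_invmx.
by rewrite det_scalar_sub_conj ?map_unitmx.
Qed.

Lemma char_poly_herm n (A : 'M[algC]_n) : A \is hermsymmx ->
  char_poly A = \prod_(i < n) ('X - (spectral_diag A 0 i)%:P).
Proof.
move=> /hermitian_normalmx/orthomx_spectralP A_diag.
rewrite {1}A_diag char_poly_conj ?spectral_unit // char_poly_trig ?diag_mx_is_trig //.
by apply: eq_bigr => i _; rewrite mxE eqxx mulr1n.
Qed.

Lemma npos_cospectral n (A B : 'M[algC]_n) a b :
  A \is hermsymmx -> B \is hermsymmx -> char_poly A = char_poly B ->
  npos A a b = npos B a b.
Proof.
move=> A_herm B_herm eq_char.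
pose spec (C : 'M[algC]_n) := [seq spectral_diag C 0 i | i <- index_enum 'I_n].
have count_spec C : npos C a b = count (fun v => 0 < a * v + b) (spec C).
  by rewrite /npos cardsE cardE count_map /enum_mem size_filter.
rewrite !count_spec; apply/permP/prod_XsubC_eq.
by rewrite !big_map -!char_poly_herm.
Qed.

Lemma distmx_herm n (g : rel 'I_n) : symmetric g -> distmx g \is hermsymmx.
Proof.
move=> g_sym; apply/is_hermitianmxP; rewrite expr0 scale1r.
by apply/matrixP => i j; rewrite !mxE conjC_nat gdist_sym.
Qed.

Definition dist2 k (H : rel 'I_k) (a b : 'I_k) : nat :=
  if a == b then 0 else if H a b then 1 else 2.

Definition diameter_le2 k (H : rel 'I_k) : Prop :=
  forall a b, a != b -> ~~ H a b -> exists c, H a c && H c b.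

Section InducedSubgraph.
Variables (n k : nat) (g : rel 'I_n) (H : rel 'I_k) (f : 'I_k -> 'I_n).
Hypotheses (g_simple : simple_graph g) (n_gt2 : (2 < n)%N) (f_inj : injective f).
Hypotheses (f_induced : forall a b, g (f a) (f b) = H a b) (H_diam : diameter_le2 H).

Lemma gdist_induced a b : gdist g (f a) (f b) = dist2 H a b.
Proof.
rewrite /dist2; have [-> | neq_ab] := eqVneq a b; first exact: gdist0.
have neq_fab : f a != f b by rewrite (inj_eq f_inj).
case Hab: (H a b); first by rewrite gdist1 // f_induced.
have [c /andP [Hac Hcb]] := H_diam neq_ab (negbT Hab).
by rewrite (@gdist2 _ _ _ _ (f c)) ?f_induced ?Hab.
Qed.

Lemma npos_distmx_ge_induced a b p (V : 'M[algC]_(p, k)) :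
  a \is Num.real -> b \is Num.real ->
  (forall z, z != 0 -> 0 < qf (a *: \matrix_(i, j) (dist2 H i j)%:R + b%:M) (z *m V)) ->
  (p <= npos (distmx g) a b)%N.
Proof.
move=> a_real b_real V_pos; pose R := rowsub f 1%:M : 'M[algC]_(k, n).
apply: (npos_ge (distmx_herm g_simple.1) (W := V *m R)) => // z /V_pos.
rewrite mulmxA (qf_mulmx _ R) rowsub1_conj; congr (0 < qf _ _).
by apply/matrixP => i j; rewrite !mxE gdist_induced (inj_eq f_inj).
Qed.

End InducedSubgraph.

Lemma Khn_simple n h : simple_graph (@Khn n h).
Proof.
split=> [i j|i]; last by rewrite /Khn eqxx.
rewrite /Khn eq_sym; congr (_ && _).
by case: (i < h)%N; case: (j < h)%N; case: (i == 0 :> nat); case: (j == 0 :> nat).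
Qed.

Section Khn.
Variables (n h : nat).
Hypotheses (h_gt0 : (0 < h)%N) (n_gt2 : (2 < n)%N).
Local Notation K := (@Khn n h).
Let root : 'I_n := Ordinal (ltnW (ltnW n_gt2)).

Lemma distmx_KhnE i j :
  distmx K i j = (if i == j then 0 else if K i j then 1 else 2)%:R.
Proof.
rewrite mxE; have [-> | neq_ij] := eqVneq i j; first by rewrite gdist0.
case Kij : (K i j); first by rewrite gdist1.
have K_root k : k != root -> K root k by rewrite /Khn eq_sym => -> /=; rewrite eqxx orbT.
have K_sym := (@Khn_simple n h).1.
have i_neq_root : i != root.
  by apply: contraFneq Kij => eq_i; rewrite eq_i K_root // -eq_i eq_sym.
have j_neq_root : j != root.
  by apply: contraFneq Kij => eq_j; rewrite eq_j K_sym K_root // -eq_j.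
by rewrite (@gdist2 _ _ _ _ root) ?Kij ?K_root // K_sym K_root.
Qed.

Definition ones : 'rV[algC]_n := const_mx 1.
Definition rootv : 'rV[algC]_n := \row_i ((i : nat) == 0)%:R.
Definition nonroot : 'rV[algC]_n := \row_i ((i : nat) != 0)%:R.
Definition pendant : 'rV[algC]_n := \row_i (h <= i)%N%:R.

(* Off the diagonal the distance exceeds 1 exactly when one end is pendant and
   the other is not the root; as pendant vertices are not the root,
   inclusion-exclusion over these two events gives the three rank-one terms. *)
Lemma distmx_Khn : distmx K = ones^T *m ones - 1%:M + nonroot^T *m pendant
  + pendant^T *m nonroot - pendant^T *m pendant - diag_mx pendant.
Proof.
apply/matrixP => i j; rewrite distmx_KhnE !mxE !big_ord1 !mxE.
have hi : (h <= i)%N -> (i : nat) != 0%N by move=> ?; apply/eqP; lia.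
have hj : (h <= j)%N -> (j : nat) != 0%N by move=> ?; apply/eqP; lia.
case: (i =P j) => [<- | /eqP ij].
  move: hi; case: (h <= i)%N; case: ((i : nat) == 0%N) => hi //=;
  try (by have := hi isT); rewrite ?mulr1n ?mulr0n; ring.
rewrite /Khn ij /= !ltnNge; move: hi hj.
case: (h <= i)%N; case: (h <= j)%N; case: ((i : nat) == 0%N); case: ((j : nat) == 0%N) => hi hj //=;
  try (by have := hi isT); try (by have := hj isT); rewrite ?mulr1n ?mulr0n; ring.
Qed.

Lemma qf_distmx_Khn a b x :
  qf (a *: distmx K + b%:M) x =
  a * (dotv ones x * (dotv ones x)^* - qf (diag_mx ones) x
       + dotv nonroot x * (dotv pendant x)^* + dotv pendant x * (dotv nonroot x)^*
       - dotv pendant x * (dotv pendant x)^* - qf (diag_mx pendant) x)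
  + b * qf (diag_mx ones) x.
Proof.
have nat_real (F : 'I_n -> nat) : (\row_i (F i)%:R : 'rV[algC]_n) \is a realmx.
  by apply/mxOverP => i j; rewrite mxE realn.
have ones_real : ones \is a realmx by apply/mxOverP => i j; rewrite mxE real1.
rewrite qfD qfZ distmx_Khn !qfB !qfD !qf_outer ?nat_real //.
by rewrite -[b%:M]scalemx1 qfZ -diag_const_mx qfN.
Qed.

Lemma dotv_rootv x : dotv rootv x = x 0 root.
Proof.
rewrite /dotv !mxE (bigD1 root) //= big1 ?addr0 => [|i neq_i]; first by rewrite !mxE eqxx mulr1.
by rewrite !mxE (_ : _ == _ = false) ?mulr0 //; apply: contraNF neq_i => /eqP i0; apply/eqP/val_inj.
Qed.

Lemma qf_diag_rootv x : qf (diag_mx rootv) x = x 0 root * (x 0 root)^*.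
Proof.
rewrite qf_diag (bigD1 root) //= big1 ?addr0 => [|i neq_i]; first by rewrite mxE eqxx mul1r.
by rewrite mxE (_ : _ == _ = false) ?mul0r //; apply: contraNF neq_i => /eqP i0; apply/eqP/val_inj.
Qed.

Lemma ones_rootv : ones = rootv + nonroot.
Proof. by apply/rowP => i; rewrite !mxE; case: ((i : nat) == 0); rewrite ?addr0 ?add0r. Qed.

Let K_herm : distmx K \is hermsymmx := distmx_herm (@Khn_simple n h).1.

Lemma npos_distmx_Khn_2_1 : (npos (distmx K) 2 1 <= 1)%N.
Proof.
apply: (npos_le_ker K_herm (L := (rootv + 2 *: nonroot)^T)) => x /dotv_eq0.
rewrite dotvD dotvZ dotv_rootv => /eqP; rewrite addr_eq0 => /eqP x0E.
rewrite qf_distmx_Khn ones_rootv dotvD [diag_mx (_ + _)]raddfD qfD dotv_rootv qf_diag_rootv x0E.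
set Q := dotv nonroot x; set P := dotv pendant x.
set dQ := qf (diag_mx nonroot) x; set dP := qf (diag_mx pendant) x.
rewrite [X in X <= 0](_ : _ = - (dQ + 2 * dP + 2 * ((Q - P) * (Q - P)^*))); last first.
  by rewrite !(rmorphD, rmorphN, rmorphM, rmorphB) /= conjC1; ring.
have dQ_ge0 : 0 <= dQ by exact: qf_diag_indicator_ge0.
have dP_ge0 : 0 <= dP by exact: qf_diag_indicator_ge0.
rewrite oppr_le0; apply: addr_ge0; [apply: addr_ge0 => // |].
  by apply: mulr_ge0; rewrite ?ler0n.
by apply: mulr_ge0; rewrite ?ler0n ?mul_conjC_ge0.
Qed.

Lemma npos_distmx_Khn_1_1 : (npos (distmx K) 1 1 <= 2)%N.
Proof.
apply: (npos_le_ker K_herm (L := row_mx pendant^T ones^T)) => x.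
rewrite mul_mx_row => /eqP; rewrite row_mx_eq0 => /andP [/eqP/dotv_eq0 P0 /eqP/dotv_eq0 S0].
rewrite qf_distmx_Khn P0 S0 rmorph0.
rewrite [X in X <= 0](_ : _ = - qf (diag_mx pendant) x); last by ring.
by rewrite oppr_le0 qf_diag_indicator_ge0.
Qed.

Lemma npos_distmx_Khn_m1_m2 : (npos (distmx K) (-1) (-2) <= 1)%N.
Proof.
apply: (npos_le_ker K_herm (L := (nonroot - pendant)^T)) => x /dotv_eq0.
rewrite dotvB => /eqP; rewrite subr_eq0 => /eqP QP.
rewrite qf_distmx_Khn QP -[diag_mx ones](subrK (diag_mx pendant)) -raddfB qfD.
set S := dotv ones x; set P := dotv pendant x.
set dP := qf (diag_mx pendant) x; set dR := qf (diag_mx (_ - _)) x.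
have dR_ge0 : 0 <= dR.
  by apply: qf_diag_ge0 => i; rewrite !mxE; case: (h <= i)%N; rewrite ?subrr ?subr0 ?ler01.
rewrite [X in X <= 0](_ : _ = - (S * S^* + P * P^* + dR)); last by ring.
by rewrite oppr_le0 !addr_ge0 ?mul_conjC_ge0.
Qed.

End Khn.

Lemma mem_iota_ord m (c : 'I_m) : (c : nat) \in iota 0 m.
Proof. by rewrite mem_iota leq0n add0n ltn_ord. Qed.

(* [edgeb] and [dist_es] are [mkgraph] and [dist2] on raw indices, so that
   certificates can be checked by evaluation. *)
Definition edgeb (es : seq (nat * nat)) (i j : nat) : bool :=
  ((i, j) \in es) || ((j, i) \in es).

Definition diameter_le2b k es : bool :=
  all (fun i => all (fun j =>
    [|| i == j, edgeb es i j | has (fun c => edgeb es i c && edgeb es c j) (iota 0 k)])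
    (iota 0 k)) (iota 0 k).

Lemma mkgraph_diameter_le2 k es : diameter_le2b k es -> diameter_le2 (@mkgraph k es).
Proof.
move=> /allP diam a b neq_ab not_ab.
have /allP /(_ _ (mem_iota_ord b)) := diam _ (mem_iota_ord a).
rewrite -[edgeb es a b]/(mkgraph es a b) (negbTE not_ab).
rewrite -[(a : nat) == b]/(a == b) (negbTE neq_ab) /=.
by case/hasP => c; rewrite mem_iota /= => lt_ck; exists (Ordinal lt_ck).
Qed.

Definition sum_iota k (F : nat -> int) : int := foldr (fun i s => F i + s) 0 (iota 0 k).

Lemma sum_iotaE k F : sum_iota k F = \sum_(i < k) F i.
Proof.
rewrite -(big_mkord xpredT) /index_iota subn0 /sum_iota.
by elim: (iota 0 k) => [|i s IH]; rewrite ?big_nil ?big_cons //= IH.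
Qed.

Definition gram k (M : nat -> nat -> int) (u v : seq int) : int :=
  sum_iota k (fun b => sum_iota k (fun a => u`_a * M a b) * v`_b).

Definition zmx m n (F : nat -> nat -> int) : 'M[algC]_(m, n) := \matrix_(i, j) (F i j)%:~R.

Lemma zmx_gram k p M (V : seq (seq int)) i j :
  let Vmx := zmx p k (fun i a => (nth [::] V i)`_a) in
  (Vmx *m zmx k k M *m Vmx^T) i j = (gram k M (nth [::] V i) (nth [::] V j))%:~R.
Proof.
rewrite /gram sum_iotaE (mulrz_sumr 1) !mxE; apply: eq_bigr => b _.
rewrite sum_iotaE intrM (mulrz_sumr 1) !mxE; congr (_ * _); apply: eq_bigr => a _.
by rewrite !mxE intrM.
Qed.

Definition dist_es (es : seq (nat * nat)) (i j : nat) : nat :=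
  if i == j then 0 else if edgeb es i j then 1 else 2.

Definition gram_diagb k p (M : nat -> nat -> int) (V : seq (seq int)) (s : seq int) :=
  all (fun i => all (fun j =>
    gram k M (nth [::] V i) (nth [::] V j) == (i == j)%:Z * s`_i) (iota 0 p)) (iota 0 p).

Definition npos_certificate k es (a b : int) p V s : bool :=
  [&& diameter_le2b k es,
      gram_diagb k p (fun i j => a * (dist_es es i j)%:Z + b * (i == j)%:Z) V s
    & all (fun i => 0 < s`_i) (iota 0 p)].

Lemma npos_distmx_ge_certified n (g : rel 'I_n) k es a b p V s :
  npos_certificate k es a b p V s -> simple_graph g -> (2 < n)%N ->
  induced_sub (@mkgraph k es) g -> (p <= npos (distmx g) a%:~R b%:~R)%N.
Proof.
case/and3P => diam /allP gram_ok /allP s_pos g_simple n_gt2 [f [f_inj f_ind]].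
pose Vmx := zmx p k (fun i c => (nth [::] V i)`_c).
pose M i j := a * (dist_es es i j)%:Z + b * (i == j)%:Z.
have DM : a%:~R *: \matrix_(i, j) (dist2 (mkgraph es) i j)%:R + b%:~R%:M = zmx k k M.
  by apply/matrixP => i j; rewrite !mxE intrD !intrM -!pmulrn !mulr_natr.
have VMV : Vmx *m zmx k k M *m Vmx^T = diag_mx (\row_i (s`_i)%:~R).
  apply/matrixP => i j; rewrite zmx_gram.
  have /allP/(_ _ (mem_iota_ord j))/eqP -> := gram_ok _ (mem_iota_ord i).
  by rewrite !mxE intrM -pmulrn mulr_natl.
apply: (npos_distmx_ge_induced g_simple n_gt2 f_inj f_ind (mkgraph_diameter_le2 diam) (V := Vmx)).
- exact: Rreal_int.
- exact: Rreal_int.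
move=> z z_neq0; rewrite DM qf_mulmx.
have -> : Vmx^t* = Vmx^T by apply/matrixP => i c; rewrite !mxE conj_intr.
by rewrite VMV; apply: qf_diag_gt0 => // i; rewrite mxE ltr0z s_pos ?mem_iota_ord.
Qed.

Lemma certified_not_induced n (g : rel 'I_n) k es a b p V s :
  npos_certificate k es a b p V s -> simple_graph g -> (2 < n)%N ->
  (npos (distmx g) a%:~R b%:~R < p)%N -> ~ induced_sub (@mkgraph k es) g.
Proof.
move=> cert g_simple n_gt2 lt_p /(npos_distmx_ge_certified cert g_simple n_gt2).
by rewrite leqNgt lt_p.
Qed.

Section ForbiddenSubgraphs.
Variables (n : nat) (g : rel 'I_n).
Hypotheses (g_simple : simple_graph g) (n_gt2 : (2 < n)%N).

Lemma not_induced_C4 : (npos (distmx g) 2 1 < 2)%N -> ~ induced_sub C4 g.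
Proof.
by apply: (certified_not_induced (a := 2) (b := 1)
  (V := [:: [:: -2; 0; -1; 2]; [:: -1; 1; 0; 1]]) (s := [:: 1; 3])).
Qed.

Lemma not_induced_C5 : (npos (distmx g) (-1) (-2) < 2)%N -> ~ induced_sub C5 g.
Proof.
by apply: (certified_not_induced (a := (-1)) (b := (-2))
  (V := [:: [:: -2; -2; 0; 1; 2]; [:: -2; 0; 1; 1; -1]]) (s := [:: 2; 2])).
Qed.

Lemma not_induced_H1 : (npos (distmx g) 2 1 < 2)%N -> ~ induced_sub H1 g.
Proof.
by apply: (certified_not_induced (a := 2) (b := 1)
  (V := [:: [:: -2; -2; 1; 0; 0]; [:: -1; 2; -2; 2; -2]]) (s := [:: 1; 1])).
Qed.

Lemma not_induced_H4 : (npos (distmx g) 1 1 < 3)%N -> ~ induced_sub H4 g.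
Proof.
by apply: (certified_not_induced (a := 1) (b := 1)
  (V := [:: [:: -2; -2; -2; 2; 1]; [:: -2; 0; -1; 2; 0]; [:: -1; -2; 0; 2; 0]])
  (s := [:: 1; 1; 1])).
Qed.

Lemma not_induced_H9 : (npos (distmx g) 2 1 < 2)%N -> ~ induced_sub H9 g.
Proof.
by apply: (certified_not_induced (a := 2) (b := 1)
  (V := [:: [:: -2; -2; 2; -1; 2]; [:: -2; 0; -2; 0; 1]]) (s := [:: 1; 1])).
Qed.

Lemma not_induced_H10 : (npos (distmx g) 2 1 < 2)%N -> ~ induced_sub H10 g.
Proof.
by apply: (certified_not_induced (a := 2) (b := 1)
  (V := [:: [:: -2; 0; -2; 0; 1]; [:: 0; -2; 2; 1; 0]]) (s := [:: 1; 1])).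
Qed.

Lemma not_induced_H11 : (npos (distmx g) 2 1 < 2)%N -> ~ induced_sub H11 g.
Proof.
by apply: (certified_not_induced (a := 2) (b := 1)
  (V := [:: [:: 1; 1; 1; 1; 1; 1]; [:: 185; 185; -49; -49; -49; -127]]) (s := [:: 78; 1326])).
Qed.

Lemma not_induced_H12 : (npos (distmx g) 2 1 < 2)%N -> ~ induced_sub H12 g.
Proof.
by apply: (certified_not_induced (a := 2) (b := 1)
  (V := [:: [:: -2; -2; 0; 1; 2; 2]; [:: -2; -1; 2; 0; -2; -2]]) (s := [:: 1; 1])).
Qed.

Lemma not_induced_H13 : (npos (distmx g) (-1) (-2) < 2)%N -> ~ induced_sub H13 g.
Proof.
by apply: (certified_not_induced (a := (-1)) (b := (-2))
  (V := [:: [:: -2; -2; -2; 1; 1; 2]; [:: -2; -1; -1; 2; 2; -2]]) (s := [:: 2; 2])).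
Qed.

End ForbiddenSubgraphs.

Local Close Scope sesquilinear_scope.
Local Close Scope ring_scope.

Theorem lemma3p1 (n h : nat) (g : rel 'I_n) :
  3 <= h -> h <= n - 1 ->
  simple_graph g -> connected_graph g ->
  D_cospectral g (@Khn n h) ->
  ~ induced_sub C4 g /\ ~ induced_sub C5 g /\ ~ induced_sub H1 g /\
  ~ induced_sub H4 g /\ ~ induced_sub H9 g /\ ~ induced_sub H10 g /\
  ~ induced_sub H11 g /\ ~ induced_sub H12 g /\ ~ induced_sub H13 g.
Proof.
move=> h_ge3 h_le g_simple _ cospec.
have [h_gt0 n_gt2] : 0 < h /\ 2 < n by split; lia.
have npos_g a b : npos (distmx g) a b = npos (distmx (@Khn n h)) a b.
  exact: npos_cospectral (distmx_herm g_simple.1) (distmx_herm (Khn_simple n h).1) cospec.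
have bound_2_1 : npos (distmx g) 2 1 < 2.
  by rewrite npos_g; exact: npos_distmx_Khn_2_1.
have bound_1_1 : npos (distmx g) 1 1 < 3.
  by rewrite npos_g; exact: npos_distmx_Khn_1_1.
have bound_m1_m2 : npos (distmx g) (-1) (-2) < 2.
  by rewrite npos_g; exact: npos_distmx_Khn_m1_m2.
repeat split.
- exact: not_induced_C4 g_simple n_gt2 bound_2_1.
- exact: not_induced_C5 g_simple n_gt2 bound_m1_m2.
- exact: not_induced_H1 g_simple n_gt2 bound_2_1.
- exact: not_induced_H4 g_simple n_gt2 bound_1_1.
- exact: not_induced_H9 g_simple n_gt2 bound_2_1.
- exact: not_induced_H10 g_simple n_gt2 bound_2_1.
- exact: not_induced_H11 g_simple n_gt2 bound_2_1.
- exact: not_induced_H12 g_simple n_gt2 bound_2_1.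
- exact: not_induced_H13 g_simple n_gt2 bound_m1_m2.
Qed.
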